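(* Let $\mathsf{A}\subset GL_2(\mathbb{R})$ with $\mathscr{R}(\mathsf{A})\neq\emptyset$ be such that $\mathcal{S}(\mathsf{A})$ is almost multiplicative. Then $\mathcal{S}(\mathsf{A})$ does not contain parabolic elements and $\mathscr{R}(\mathsf{A})$ does not contain nilpotent elements.
   Context: $\|\cdot\|$ is the operator norm. $\mathcal{S}(\mathsf{A})$ is the semigroup of finite products of elements of $\mathsf{A}$; $\mathscr{S}(\mathsf{A})=\overline{\mathbb{R}\mathcal{S}(\mathsf{A})}\subset M_2(\mathbb{R})$; $\mathscr{R}(\mathsf{A})=\{A\in\mathscr{S}(\mathsf{A}):\operatorname{rank}(A)=1\}$. A semigroup $\mathcal{S}$ is almost multiplicative if there is $\kappa>0$ with $\|AB\|\ge\kappa\|A\|\|B\|$ for all $A,B\in\mathcal{S}$. A matrix is parabolic if it has only one eigenspace (its single eigenvalue has geometric multiplicity one). *)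

From HB Require Import structures.
From mathcomp Require Import all_boot all_order all_algebra.
From mathcomp Require Import all_classical all_reals all_analysis.
Set Implicit Arguments. Unset Strict Implicit. Unset Printing Implicit Defensive.
Import Order.TTheory GRing.Theory Num.Theory.
Local Open Scope classical_set_scope.
Local Open Scope ring_scope.

Section Defs.
Variable R : realType.

Definition euclid (v : 'cV[R]_2) : R := Num.sqrt (\sum_i (v i ord0) ^+ 2).

Definition opnorm (M : 'M[R]_2) : R :=
  sup [set euclid (M *m v) | v in [set v : 'cV[R]_2 | euclid v = 1]].

Definition semigroup_gen (A : set 'M[R]_2) : set 'M[R]_2 :=
  [set M | exists s : seq 'M[R]_2,
     [/\ s != [::], (forall x, x \in s -> A x) & M = \prod_(x <- s) x]].

Definition scrS (A : set 'M[R]_2) : set 'M[R]_2 :=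
  closure ([set c *: M | c in [set: R] & M in semigroup_gen A]
           : set ('M[R]_(2, 2) : normedModType R)).

Definition scrR (A : set 'M[R]_2) : set 'M[R]_2 :=
  [set M | scrS A M /\ \rank M = 1%N].

Definition almost_multiplicative (S : set 'M[R]_2) : Prop :=
  exists kappa : R, 0 < kappa /\
    forall M N, S M -> S N -> opnorm (M * N) >= kappa * opnorm M * opnorm N.

Definition parabolic (M : 'M[R]_2) : Prop :=
  exists lam : R, [/\ eigenvalue M lam,
                     (forall mu, eigenvalue M mu -> mu = lam) &
                     \rank (eigenspace M lam) = 1%N].

Definition nilpotent (M : 'M[R]_2) : Prop := exists n : nat, M ^+ n = 0.
End Defs.

(* Replace the operator norm by the entrywise l1 norm |.|_1, which is
   submultiplicative and within a factor 4 of it.  Almost multiplicativity then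
   gives k |P|_1^2 <= |P^2|_1 for every P in S(A), an inequality invariant under
   scaling.  A parabolic matrix is lam (1 + U), or U itself if lam = 0, with
   U^2 = 0 and U <> 0; its powers are lam^m (1 + m U), and |(1 + m U)^2|_1 =
   |1 + 2m U|_1 grows linearly in m while k |1 + m U|_1^2 grows quadratically.
   A rank-one nilpotent 2x2 matrix N satisfies N^2 = 0 and N <> 0, and the
   inequality fails on a whole neighbourhood of such an N, so N is not in the
   closure of R S(A). *)
From HB Require Import structures.
From mathcomp Require Import all_boot all_order all_algebra.
From mathcomp Require Import all_classical all_reals all_analysis.
From mathcomp Require Import ring lra.
Set Implicit Arguments.
Unset Strict Implicit.
Unset Printing Implicit Defensive.
Import Order.TTheory GRing.Theory Num.Theory.
Local Open Scope classical_set_scope.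
Local Open Scope ring_scope.

Section TwoByTwo.
Variable R : realType.
Implicit Types (X Y N U : 'M[R]_2) (v : 'cV[R]_2).

Notation i0 := (0 : 'I_2).
Notation i1 := (1 : 'I_2).

Lemma ord2_cases (i : 'I_2) : i = i0 \/ i = i1.
Proof. by case: i => [[|[|k]] Hk]; [left|right|]; try apply: val_inj. Qed.

Lemma sum_ord2 (F : 'I_2 -> R) : \sum_i F i = F i0 + F i1.
Proof. by rewrite !big_ord_recl big_ord0 addr0; congr (_ + F _); apply: val_inj. Qed.

Lemma mul_mx2E X Y i j : (X * Y) i j = X i i0 * Y i0 j + X i i1 * Y i1 j.
Proof. by rewrite -mulmxE mxE sum_ord2. Qed.

Lemma matrix2P X Y : X i0 i0 = Y i0 i0 -> X i0 i1 = Y i0 i1 ->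
  X i1 i0 = Y i1 i0 -> X i1 i1 = Y i1 i1 -> X = Y.
Proof.
by move=> *; apply/matrixP => i j; case: (ord2_cases i) => ->; case: (ord2_cases j) => ->.
Qed.

Lemma det_mx2 X : \det X = X i0 i0 * X i1 i1 - X i0 i1 * X i1 i0.
Proof.
rewrite (expand_det_row _ i0) sum_ord2 /cofactor !det_mx11 !mxE /=.
have -> : lift i0 0 = i1 by apply: val_inj.
have -> : lift i1 0 = i0 by apply: val_inj.
by rewrite expr0 expr1 !mul1r; ring.
Qed.

Lemma trace_mx2 X : \tr X = X i0 i0 + X i1 i1.
Proof. by rewrite /mxtrace sum_ord2. Qed.

Lemma Cayley_Hamilton_mx2 X : X * X = \tr X *: X - (\det X)%:M.
Proof.
by apply: matrix2P; rewrite !mul_mx2E !mxE trace_mx2 det_mx2 /= ?mulr1n ?mulr0n; ring.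
Qed.

Lemma det_mx2_subr_scalar X mu :
  \det (X - mu%:M) = mu ^+ 2 - \tr X * mu + \det X.
Proof. by rewrite !det_mx2 trace_mx2 !mxE /= ?mulr1n ?mulr0n; ring. Qed.

Lemma nilpotent_mx2_sqr0 X : nilpotent X -> X * X = 0.
Proof.
case=> n Xn0.
have det0 : \det X = 0.
  apply/eqP; apply: contraTT isT => /negPf detX.
  have : X ^+ n \is a GRing.unit by rewrite unitrX // unitmxE unitfE detX.
  by rewrite Xn0 unitr0.
have XX : X * X = \tr X *: X by rewrite Cayley_Hamilton_mx2 det0 raddf0 subr0.
have Xpow k : X ^+ k.+1 = \tr X ^+ k *: X.
  elim: k => [|k IH]; first by rewrite expr1 expr0 scale1r.
  by rewrite exprS IH -scalerAr XX scalerA -exprSr.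
case: n Xn0 => [|k]; first by move/eqP; rewrite expr0 oner_eq0.
rewrite Xpow XX => /eqP; rewrite scaler_eq0 expf_eq0.
by case/orP=> [/andP[_ /eqP->]|/eqP->]; rewrite ?scale0r ?scaler0.
Qed.

Lemma parabolic_sqr0 X : parabolic X ->
  exists lam N, [/\ X = lam%:M + N, N != 0 & N * N = 0].
Proof.
case=> lam [eig_lam eig_uniq rank_eig].
have eigenvalueE mu : eigenvalue X mu = (\det (X - mu%:M) == 0).
  by rewrite /eigenvalue /eigenspace kermx_eq0 row_free_unit unitmxE unitfE negbK.
set N := X - lam%:M.
have detN : \det N = 0 by apply/eqP; rewrite -eigenvalueE.
have trN : \tr N = 0.
  have eig_shift : eigenvalue X (lam + \tr N).
    rewrite eigenvalueE raddfD opprD addrA -/N det_mx2_subr_scalar detN.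
    by rewrite expr2 subrr addr0.
  by apply: (addrI lam); rewrite addr0; exact: eig_uniq.
exists lam, N; split; first by rewrite addrC subrK.
  by apply/eqP => N0; move: rank_eig; rewrite /eigenspace -/N N0 kermx0 mxrank1.
by rewrite Cayley_Hamilton_mx2 trN detN scale0r raddf0 subr0.
Qed.

Lemma unipotent_expr N m : N * N = 0 -> (1 + N) ^+ m = 1 + m%:R *: N.
Proof.
move=> NN; elim: m => [|m IH]; first by rewrite expr0 scale0r addr0.
rewrite exprSr IH mulrDl mul1r mulrDr mulr1 -scalerAl NN scaler0 addr0.
by rewrite -natr1 scalerDl scale1r addrA addrAC.
Qed.

Definition l1norm X := `|X i0 i0| + `|X i0 i1| + `|X i1 i0| + `|X i1 i1|.

Lemma l1norm_ge0 X : 0 <= l1norm X.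
Proof. by rewrite /l1norm !addr_ge0. Qed.

Lemma l1normZ c X : l1norm (c *: X) = `|c| * l1norm X.
Proof. by rewrite /l1norm !mxE !normrM; ring. Qed.

Lemma l1normN X : l1norm (- X) = l1norm X.
Proof. by rewrite /l1norm !mxE !normrN. Qed.

Lemma l1norm1 : l1norm 1 = 2%:R.
Proof. by rewrite /l1norm !mxE /= normr1 normr0; ring. Qed.

Lemma ler_l1normD X Y : l1norm (X + Y) <= l1norm X + l1norm Y.
Proof.
rewrite /l1norm !mxE.
have := ler_normD (X i0 i0) (Y i0 i0); have := ler_normD (X i0 i1) (Y i0 i1).
have := ler_normD (X i1 i0) (Y i1 i0); have := ler_normD (X i1 i1) (Y i1 i1).
lra.
Qed.

Lemma ler_l1normM X Y : l1norm (X * Y) <= l1norm X * l1norm Y.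
Proof.
have le_dot (a b c d : R) : `|a * b + c * d| <= `|a| * `|b| + `|c| * `|d|.
  by rewrite -!normrM; apply: ler_normD.
rewrite /l1norm !mul_mx2E.
have := le_dot (X i0 i0) (Y i0 i0) (X i0 i1) (Y i1 i0).
have := le_dot (X i0 i0) (Y i0 i1) (X i0 i1) (Y i1 i1).
have := le_dot (X i1 i0) (Y i0 i0) (X i1 i1) (Y i1 i0).
have := le_dot (X i1 i0) (Y i0 i1) (X i1 i1) (Y i1 i1).
have := normr_ge0 (X i0 i0); have := normr_ge0 (X i0 i1).
have := normr_ge0 (X i1 i0); have := normr_ge0 (X i1 i1).
have := normr_ge0 (Y i0 i0); have := normr_ge0 (Y i0 i1).
have := normr_ge0 (Y i1 i0); have := normr_ge0 (Y i1 i1).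
nra.
Qed.

Lemma l1norm_gt0 X : X != 0 -> 0 < l1norm X.
Proof.
apply: contraNT; rewrite -leNgt /l1norm => le0.
apply/eqP/matrixP => i j; rewrite mxE; apply/eqP.
rewrite -normr_eq0 eq_le normr_ge0 andbT.
have := normr_ge0 (X i0 i0); have := normr_ge0 (X i0 i1).
have := normr_ge0 (X i1 i0); have := normr_ge0 (X i1 i1).
by case: (ord2_cases i) => ->; case: (ord2_cases j) => ->; lra.
Qed.

Lemma l1norm_ball X Y (eps : R) :
  ball (X : 'M[R]_(2, 2) : normedModType R) eps Y -> l1norm (Y - X) < 4%:R * eps.
Proof.
case=> _ near; rewrite /l1norm !mxE.
have := near i0 i0; have := near i0 i1; have := near i1 i0; have := near i1 i1.
rewrite /ball /= -!(distrC (X _ _)); lra.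
Qed.

Lemma l1norm_sqr_perturb N D : N * N = 0 ->
  l1norm ((N + D) * (N + D)) <= l1norm D * (2%:R * l1norm N + l1norm D).
Proof.
move=> NN.
have -> : (N + D) * (N + D) = N * D + (D * N + D * D).
  by rewrite mulrDl !mulrDr NN add0r.
have := ler_l1normD (N * D) (D * N + D * D); have := ler_l1normD (D * N) (D * D).
have := ler_l1normM N D; have := ler_l1normM D N; have := ler_l1normM D D.
lra.
Qed.

Lemma euclid2E v : euclid v = Num.sqrt (v i0 0 ^+ 2 + v i1 0 ^+ 2).
Proof. by rewrite /euclid sum_ord2. Qed.

Lemma ler_euclid v : euclid v <= `|v i0 0| + `|v i1 0|.
Proof.
rewrite euclid2E -[leRHS]ger0_norm ?addr_ge0 // -sqrtr_sqr ler_sqrt ?sqr_ge0 //.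
rewrite -(real_normK (num_real (v i0 0))) -(real_normK (num_real (v i1 0))).
have := normr_ge0 (v i0 0); have := normr_ge0 (v i1 0); nra.
Qed.

Lemma ler_entry_euclid v i : `|v i 0| <= euclid v.
Proof.
rewrite euclid2E -sqrtr_sqr ler_sqrt ?addr_ge0 ?sqr_ge0 //.
by case: (ord2_cases i) => ->; rewrite ?lerDl ?lerDr sqr_ge0.
Qed.

Lemma euclid_delta j : euclid (delta_mx j 0 : 'cV[R]_2) = 1.
Proof.
by rewrite euclid2E !mxE; case: (ord2_cases j) => ->;
  rewrite /= expr0n /= ?add0r ?addr0 expr1n sqrtr1.
Qed.

Lemma euclid_mul_le_l1norm X v : euclid v = 1 -> euclid (X *m v) <= l1norm X.
Proof.
move=> v1; apply: le_trans (ler_euclid _) _; rewrite !mxE !sum_ord2 /l1norm.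
have le_entry (a : R) i : `|a * v i 0| <= `|a|.
  by rewrite normrM ler_piMr // -v1 ler_entry_euclid.
have := le_entry (X i0 i0) i0; have := le_entry (X i0 i1) i1.
have := le_entry (X i1 i0) i0; have := le_entry (X i1 i1) i1.
have := ler_normD (X i0 i0 * v i0 0) (X i0 i1 * v i1 0).
have := ler_normD (X i1 i0 * v i0 0) (X i1 i1 * v i1 0).
lra.
Qed.

Lemma opnorm_le_l1norm X : opnorm X <= l1norm X.
Proof.
apply: ge_sup; last by move=> _ [v /= v1 <-]; exact: euclid_mul_le_l1norm.
by exists (euclid (X *m delta_mx i0 0)), (delta_mx i0 0); first exact: euclid_delta.
Qed.

Lemma ler_entry_opnorm X i j : `|X i j| <= opnorm X.
Proof.
have ub : has_ubound [set euclid (X *m v) | v in [set v | euclid v = 1]].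
  by exists (l1norm X) => _ [v /= v1 <-]; exact: euclid_mul_le_l1norm.
apply: le_trans (ub_le_sup ub _); last by exists (delta_mx j 0); first exact: euclid_delta.
by rewrite -colE; have := ler_entry_euclid (col j X) i; rewrite mxE.
Qed.

Lemma l1norm_le_opnorm X : l1norm X <= 4%:R * opnorm X.
Proof.
rewrite /l1norm; have := ler_entry_opnorm X i0 i0; have := ler_entry_opnorm X i0 i1.
have := ler_entry_opnorm X i1 i0; have := ler_entry_opnorm X i1 i1; lra.
Qed.

Lemma semigroup_genM (A : set 'M[R]_2) X Y :
  semigroup_gen A X -> semigroup_gen A Y -> semigroup_gen A (X * Y).
Proof.
move=> [s [s_nil sA ->]] [t [_ tA ->]]; exists (s ++ t); split.
- by case: s s_nil {sA}.
- by move=> x; rewrite mem_cat => /orP[/sA|/tA].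
- by rewrite big_cat.
Qed.

Lemma semigroup_genX (A : set 'M[R]_2) X n :
  semigroup_gen A X -> semigroup_gen A (X ^+ n.+1).
Proof.
move=> AX; elim: n => [|n IH]; first by rewrite expr1.
by rewrite exprSr; apply: semigroup_genM.
Qed.

Definition sqr_l1norm_ge (k : R) : set ('M[R]_(2, 2) : normedModType R) :=
  [set Y | k * l1norm Y ^+ 2 <= l1norm (Y * Y)].

Lemma sqr_l1norm_geZ k c Y : sqr_l1norm_ge k Y -> sqr_l1norm_ge k (c *: Y).
Proof.
rewrite /sqr_l1norm_ge /= -scalerAl -scalerAr scalerA !l1normZ normrM => le_kY.
by rewrite exprMn mulrCA -expr2 ler_wpM2l ?sqr_ge0.
Qed.

Lemma almost_multiplicative_sqr_l1norm (A : set 'M[R]_2) :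
  almost_multiplicative (semigroup_gen A) ->
  exists2 k, 0 < k & semigroup_gen A `<=` sqr_l1norm_ge k.
Proof.
case=> kappa [kappa_gt0 am]; exists (kappa / 16%:R).
  by rewrite divr_gt0 ?ltr0n.
move=> P AP; rewrite /sqr_l1norm_ge /=.
have le_opnorm : l1norm P ^+ 2 <= 16%:R * (opnorm P * opnorm P).
  have := l1norm_le_opnorm P; have := l1norm_ge0 P; nra.
apply: le_trans (opnorm_le_l1norm _); apply: le_trans (am _ _ AP AP).
apply: le_trans (ler_wpM2l _ le_opnorm) _; first by rewrite divr_ge0 ?ltW.
by rewrite !mulrA divfK ?pnatr_eq0.
Qed.

Lemma scrS_sub_closure (A : set 'M[R]_2) k :
  semigroup_gen A `<=` sqr_l1norm_ge k -> scrS A `<=` closure (sqr_l1norm_ge k).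
Proof.
move=> sub.
have scaled_sub : [set c *: M | c in [set: R] & M in semigroup_gen A] `<=` sqr_l1norm_ge k.
  by move=> _ [c _ [P /sub AP <-]]; exact: sqr_l1norm_geZ.
exact: (@closureS ('M[R]_(2, 2) : normedModType R) _ _ scaled_sub).
Qed.

Lemma sqr0_notin_closure k N : 0 < k -> N != 0 -> N * N = 0 ->
  ~ closure (sqr_l1norm_ge k) N.
Proof.
move=> k_gt0 N_neq0 NN clN.
have n_gt0 : 0 < l1norm N by exact: l1norm_gt0.
set n := l1norm N in n_gt0.
set eps := Num.min 1 k * n / 16%:R.
have eps_gt0 : 0 < eps by rewrite !mulr_gt0 ?lt_min ?invr_gt0 ?ltr01 ?ltr0n.
have [Y [kY /l1norm_ball near]] := clN _ (nbhsx_ballx _ eps eps_gt0).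
have min_le1 : Num.min 1 k <= 1 by rewrite ge_min lexx.
have min_lek : Num.min 1 k <= k by rewrite ge_min lexx orbT.
have d_ge0 := l1norm_ge0 (Y - N).
set d := l1norm (Y - N) in near d_ge0.
(* d < min(1, k) n / 4 gives |Y^2|_1 <= d (2n + d) < k (3n/4)^2 <= k |Y|_1^2. *)
have d_small : d < n / 4%:R by move: near; rewrite /eps; nra.
have d_smallk : d < k * n / 4%:R by move: near; rewrite /eps; nra.
have upper : l1norm (Y * Y) <= d * (2%:R * n + d).
  by rewrite -[Y](addrNK N) addrC l1norm_sqr_perturb.
have lower : k * (3%:R * n / 4%:R) ^+ 2 <= k * l1norm Y ^+ 2.
  have : n - d <= l1norm Y.
    have := ler_l1normD Y (N - Y).
    by rewrite addrC subrK -opprB l1normN -/n -/d; lra.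
  by move=> ?; rewrite ler_pM2l // ler_sqr ?nnegrE ?l1norm_ge0 //; lra.
have : d * (2%:R * n + d) <= d * (9%:R * n / 4%:R) by apply: ler_wpM2l => //; lra.
have : d * (9%:R * n / 4%:R) < k * n / 4%:R * (9%:R * n / 4%:R).
  by rewrite ltr_pM2r //; lra.
rewrite /sqr_l1norm_ge /= in kY; lra.
Qed.

Lemma unipotent_notin_sqr_l1norm_ge k U : 0 < k -> U != 0 -> U * U = 0 ->
  exists m, ~ sqr_l1norm_ge k (1 + m.+1%:R *: U).
Proof.
move=> k_gt0 U_neq0 UU.
have u_gt0 : 0 < l1norm U by exact: l1norm_gt0.
have [m m_big] : exists m : nat, (4%:R + 5%:R / k) / l1norm U < m%:R.
  exists (Num.bound ((4%:R + 5%:R / k) / l1norm U)); apply: archi_boundP.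
  by rewrite divr_ge0 ?addr_ge0 ?divr_ge0 ?ler0n // ltW.
exists m; rewrite /sqr_l1norm_ge /=.
set V := m.+1%:R *: U.
have VV : V * V = 0 by rewrite -scalerAl -scalerAr UU !scaler0.
have x_big : 4%:R + 5%:R / k < l1norm V.
  rewrite l1normZ normr_nat -ltr_pdivrMr //; apply: lt_le_trans m_big _.
  by rewrite ler_nat.
have lower : l1norm V - 2%:R <= l1norm (1 + V).
  have := ler_l1normD (1 + V) (- 1).
  by rewrite addrAC subrr add0r l1normN l1norm1; lra.
have upper : l1norm ((1 + V) * (1 + V)) <= 2%:R + 2%:R * l1norm V.
  rewrite -expr2 unipotent_expr //; apply: le_trans (ler_l1normD _ _) _.
  by rewrite l1norm1 l1normZ normr_nat.
set x := l1norm V in x_big lower upper.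
(* With y = x - 2 > 2 + 5/k: |(1 + V)^2|_1 <= 6 + 2y <= 5y < k y^2 <= k |1 + V|_1^2. *)
have k5_gt0 : 0 < 5%:R / k by rewrite divr_gt0.
have ky : 5%:R < k * (x - 2%:R).
  have : k * (4%:R + 5%:R / k) < k * x by rewrite ltr_pM2l.
  by rewrite mulrDr mulrCA divff ?gt_eqF // mulr1; lra.
have : k * (x - 2%:R) ^+ 2 <= k * l1norm (1 + V) ^+ 2.
  by rewrite ler_pM2l // ler_sqr ?nnegrE ?l1norm_ge0 //; lra.
have : 5%:R * (x - 2%:R) < k * (x - 2%:R) * (x - 2%:R) by rewrite ltr_pM2r //; lra.
lra.
Qed.

Lemma not_parabolic_of_sqr_l1norm_ge k X : 0 < k ->
  (forall n, sqr_l1norm_ge k (X ^+ n.+1)) -> ~ parabolic X.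
Proof.
move=> k_gt0 powX /parabolic_sqr0 [lam [N [X_eq N_neq0 NN]]].
have [lam0|lam_neq0] := eqVneq lam 0.
  have := powX 0; rewrite expr1 X_eq lam0 raddf0 add0r => kN.
  exact: sqr0_notin_closure k_gt0 N_neq0 NN (@subset_closure _ (sqr_l1norm_ge k) N kN).
pose U := lam^-1 *: N.
have U_neq0 : U != 0 by rewrite scaler_eq0 invr_eq0 negb_or lam_neq0.
have UU : U * U = 0 by rewrite -scalerAl -scalerAr NN !scaler0.
have [m U_notin] := unipotent_notin_sqr_l1norm_ge k_gt0 U_neq0 UU.
have X_eqU : X = lam *: (1 + U).
  by rewrite X_eq scalerDr scalerA divff // scale1r -scalemx1.
apply: U_notin; have := sqr_l1norm_geZ (lam ^+ m.+1)^-1 (powX m).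
by rewrite X_eqU exprZn unipotent_expr // scalerA mulVf ?expf_neq0 // scale1r.
Qed.

End TwoByTwo.

Theorem lemma3p2 (R : realType) (A : set 'M[R]_2) :
  (forall M, A M -> M \in unitmx) ->
  scrR A !=set0 ->
  almost_multiplicative (semigroup_gen A) ->
  (forall M, semigroup_gen A M -> ~ parabolic M) /\
  (forall M, scrR A M -> ~ nilpotent M).
Proof.
move=> _ _ /almost_multiplicative_sqr_l1norm [k k_gt0 SA_sub].
split=> M.
- move=> SAM; apply: (not_parabolic_of_sqr_l1norm_ge k_gt0) => n.
  exact/SA_sub/semigroup_genX.
- move=> [scrSM rankM] /nilpotent_mx2_sqr0 MM.
  have M_neq0 : M != 0 by rewrite -mxrank_eq0 rankM.
  exact: sqr0_notin_closure k_gt0 M_neq0 MM (scrS_sub_closure SA_sub scrSM).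
Qed.
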